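(* Let $P:(-\infty,\tfrac12)\to\mathbb{C}\cong\mathbb{R}^2$ be the log-aesthetic curve with shape parameter $\alpha=-1$ and $\Lambda=1$ (a clothoid), $P(\theta)=\int_0^\theta(1-2\psi)^{-1/2}e^{i\psi}\,d\psi$, and let $\delta=\tfrac{2\pi}{3}$. Let $I_\delta$ be its isoptic curve for the angle $\gamma=\pi-\delta=\pi/3$, parametrized for $\theta<\tfrac12-\delta$ by $$I_\delta(\theta)=P(\theta)+\csc(\delta)\Big(V_x(\theta)\sin(\theta+\delta)-V_y(\theta)\cos(\theta+\delta)\Big)(\cos\theta,\sin\theta)^T,$$ where $(V_x(\theta),V_y(\theta))^T$ is the vector $P(\theta+\delta)-P(\theta)$ (i.e. $I_\delta(\theta)$ is the intersection of the tangent lines of $P$ at $P(\theta)$ and $P(\theta+\delta)$). Then the logarithmic curvature graph of $I_\delta$ is not a straight line (its slope is not constant); hence the isoptic is not a log-aesthetic curve, and in particular the clothoid is not autoisoptic. Moreover, the slope of the logarithmic curvature graph of $I_\delta$ (measured between the points with parameters $\theta$ and $\theta-\pi$) tends to $-1$ as $\theta\to-\infty$.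
   Context: For a regular plane curve with radius of curvature $\rho$ and arc length $s$, the logarithmic curvature graph (LCG) is the curve traced by the points $\big(\log\rho,\ \log(\rho\,|ds/d\rho|)\big)$ along the curve. A log-aesthetic curve with shape parameter $\alpha$ is a curve whose LCG is a straight line of slope $\alpha$, i.e. $\log(\rho\, ds/d\rho)=\alpha\log\rho+c$ for a constant $c$. A curve is called autoisoptic if it coincides (up to similarity) with its isoptic curve. The isoptic curve for angle $\gamma\in(0,\pi)$ is the locus of points from which the curve is seen under angle $\gamma$ (intersection points of pairs of tangent lines meeting at angle $\gamma$). *)

From Stdlib Require Import Reals.
From Coquelicot Require Import Coquelicot.
Open Scope R_scope.

Definition delta : R := 2 * PI / 3.

Definition Px (t : R) : R := RInt (fun psi => cos psi / sqrt (1 - 2 * psi)) 0 t.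
Definition Py (t : R) : R := RInt (fun psi => sin psi / sqrt (1 - 2 * psi)) 0 t.

Definition Vx (t : R) : R := Px (t + delta) - Px t.
Definition Vy (t : R) : R := Py (t + delta) - Py t.

Definition kI (t : R) : R :=
  / sin delta * (Vx t * sin (t + delta) - Vy t * cos (t + delta)).

Definition Ix (t : R) : R := Px t + kI t * cos t.
Definition Iy (t : R) : R := Py t + kI t * sin t.

Definition speedI (t : R) : R :=
  sqrt (Derive Ix t ^ 2 + Derive Iy t ^ 2).
Definition crossI (t : R) : R :=
  Derive Ix t * Derive (Derive Iy) t - Derive Iy t * Derive (Derive Ix) t.
(* radius of curvature rho = 1/|kappa| = |I'|^3 / |I' x I''| *)
Definition rhoI (t : R) : R := speedI t ^ 3 / Rabs (crossI t).

(* Logarithmic curvature graph: (log rho, log (rho |ds/drho|)),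
   with ds/drho = (ds/dtheta)/(drho/dtheta). *)
Definition LCGx (t : R) : R := ln (rhoI t).
Definition LCGy (t : R) : R := ln (rhoI t * Rabs (speedI t / Derive rhoI t)).

Definition LCG_defined (t : R) : Prop :=
  t < / 2 - delta /\ 0 < speedI t /\ crossI t <> 0 /\ Derive rhoI t <> 0.

Definition LCG_slope (t : R) : R :=
  (LCGy t - LCGy (t - PI)) / (LCGx t - LCGx (t - PI)).

(* Write the velocity of the isoptic in the frame of the clothoid's tangent at P(theta).  Its two
   components are integrals of rhoP(psi) e^{i psi} over [theta, theta + delta], where
   rhoP(psi) = (1 - 2 psi)^(-1/2) is the radius of curvature of the clothoid; four integrations by
   parts expand them, after division by rhoP(theta), in powers of
   eta = sin delta * rhoP(theta)^2, which tends to 0 as theta -> -oo.  The speed, the curvature and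
   d rho / d theta of the isoptic are rhoP-multiples of quantities with explicit expansions in eta,
   and one finds
     LCGx = ln rhoP + ln 4 / 2 + O(eta),    LCGx + LCGy = ln 4 + c eta^2 + O(eta^3)  with c < 0.
   As ln rhoP(theta) - ln rhoP(theta - pi) >= eta, the slope between theta - pi and theta is
   -1 + O(eta).  A straight LCG would therefore have slope -1, making LCGx + LCGy constant, hence
   equal to its limit ln 4; but LCGx + LCGy stays strictly below ln 4. *)

From Stdlib Require Import Reals Lra.
From Coquelicot Require Import Coquelicot.
Open Scope R_scope.

Lemma lincomb_eq (x y p q c : R) : p = q -> x - y = c * (p - q) -> x = y.
Proof. intros -> h; lra. Qed.

Lemma sin2_cos2_pow x : sin x ^ 2 + cos x ^ 2 = 1.
Proof. rewrite <- (sin2_cos2 x); unfold Rsqr; ring. Qed.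

Lemma rotate_sqr_norm a b t :
  (a * cos t - b * sin t) ^ 2 + (a * sin t + b * cos t) ^ 2 = a ^ 2 + b ^ 2.
Proof. apply (lincomb_eq _ _ _ _ (a ^ 2 + b ^ 2) (sin2_cos2_pow t)); ring. Qed.

Lemma rotate_cross a b p q t :
  (a * cos t - b * sin t) * (p * sin t + q * cos t)
  - (a * sin t + b * cos t) * (p * cos t - q * sin t)
  = a * q - b * p.
Proof. apply (lincomb_eq _ _ _ _ (a * q - b * p) (sin2_cos2_pow t)); ring. Qed.

Lemma ln_sqrt x : 0 < x -> ln (sqrt x) = ln x / 2.
Proof.
  intro hx; rewrite <- (sqrt_sqrt x) at 2 by lra.
  rewrite ln_mult by (apply sqrt_lt_R0, hx); field.
Qed.

Lemma ln_le_sub_1 x : 0 < x -> ln x <= x - 1.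
Proof. intro hx; assert (he := exp_ineq1_le (ln x)); rewrite exp_ln in he by exact hx; lra. Qed.

Lemma ln_ge_1_sub_inv x : 0 < x -> 1 - / x <= ln x.
Proof.
  intro hx; assert (hl := ln_le_sub_1 (/ x) (Rinv_0_lt_compat _ hx)).
  rewrite ln_Rinv in hl by exact hx; lra.
Qed.

Lemma Rabs_ln_1p_sub_le y : Rabs y <= 1 / 2 -> Rabs (ln (1 + y) - y) <= 2 * y ^ 2.
Proof.
  intro hy; apply Rabs_le_between in hy.
  assert (up := ln_le_sub_1 (1 + y) ltac:(lra)).
  assert (lo := ln_ge_1_sub_inv (1 + y) ltac:(lra)).
  replace (1 - / (1 + y)) with (y - y ^ 2 / (1 + y)) in lo by (field; lra).
  assert (y ^ 2 / (1 + y) <= 2 * y ^ 2).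
  { apply (Rmult_le_reg_r (1 + y)); [lra |]; field_simplify; [nra | lra]. }
  apply Rabs_le; pose proof (pow2_ge_0 y); lra.
Qed.

Lemma Rabs_ln_1p_le y : Rabs y <= 1 / 2 -> Rabs (ln (1 + y)) <= 2 * Rabs y.
Proof.
  intro hy; pose proof (Rabs_ln_1p_sub_le y hy).
  assert (y ^ 2 <= Rabs y * (1 / 2)) by (rewrite <- (pow2_abs y); pose proof (Rabs_pos y); nra).
  pose proof (Rabs_triang_inv (ln (1 + y)) y); lra.
Qed.

Lemma ln_first_order_at (x a b K s : R) : 0 < a -> 0 <= K -> 0 <= s <= 1 ->
  (Rabs b + K) / a * s <= 1 / 2 -> Rabs (x - (a + b * s)) <= K * s ^ 2 ->
  Rabs (ln x - (ln a + b / a * s)) <= (2 * ((Rabs b + K) / a) ^ 2 + K / a) * s ^ 2.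
Proof.
  intros ha hK hs hsmall hx; set (y := x / a - 1).
  assert (hy1 : Rabs (y - b / a * s) <= K / a * s ^ 2).
  { replace (y - b / a * s) with ((x - (a + b * s)) / a) by (unfold y; field; lra).
    unfold Rdiv; rewrite Rabs_mult, (Rabs_right (/ a))
      by (apply Rle_ge, Rlt_le, Rinv_0_lt_compat, ha).
    apply (Rmult_le_reg_r a); [exact ha |]; field_simplify; lra. }
  assert (hy2 : Rabs y <= (Rabs b + K) / a * s).
  { replace y with ((y - b / a * s) + b / a * s) by ring.
    eapply Rle_trans; [apply Rabs_triang |].
    rewrite Rabs_mult, (Rabs_right s) by lra; unfold Rdiv; rewrite Rabs_mult,
      (Rabs_right (/ a)) by (apply Rle_ge, Rlt_le, Rinv_0_lt_compat, ha).
    assert (0 <= K * / a) by (apply Rmult_le_pos; [lra | apply Rlt_le, Rinv_0_lt_compat, ha]).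
    assert (K * / a * s ^ 2 <= K * / a * s) by (apply Rmult_le_compat_l; nra).
    unfold Rdiv in hy1; lra. }
  assert (hln : ln x = ln a + ln (1 + y)).
  { rewrite <- ln_mult by (try apply Rabs_le_between in hy2; lra); f_equal; unfold y; field; lra. }
  rewrite hln; replace (ln a + ln (1 + y) - (ln a + b / a * s))
    with ((ln (1 + y) - y) + (y - b / a * s)) by ring.
  eapply Rle_trans; [apply Rabs_triang |].
  assert (y ^ 2 <= ((Rabs b + K) / a) ^ 2 * s ^ 2).
  { rewrite <- Rpow_mult_distr, <- (pow2_abs y).
    apply pow_incr; split; [apply Rabs_pos | exact hy2]. }
  pose proof (Rabs_ln_1p_sub_le y ltac:(lra)); lra.
Qed.

Lemma inv_sqrt_le_2 x r : 0 <= x <= 1 / 4 -> 0 < r -> r ^ 2 * (1 - 2 * x) = 1 -> r <= 2.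
Proof. intros hx hr e; nra. Qed.

Lemma inv_sqrt_taylor3 x r : 0 <= x <= 1 / 4 -> 0 < r -> r ^ 2 * (1 - 2 * x) = 1 ->
  Rabs (r - (1 + x + 3 / 2 * x ^ 2 + 5 / 2 * x ^ 3)) <= 12 * x ^ 4.
Proof.
  intros hx hr e; set (q := 1 + x + 3 / 2 * x ^ 2 + 5 / 2 * x ^ 3).
  set (w := 35 / 4 + 7 * x + 35 / 4 * x ^ 2 + 25 / 2 * x ^ 3).
  assert (hq : 1 <= q) by (unfold q; nra).
  assert (hr1 : 1 <= r) by nra.
  assert (hw : 0 <= w <= 12) by (unfold w; nra).
  (* [q] is the Taylor polynomial of [(1 - 2x)^(-1/2)]: [1 - q^2 (1 - 2x) = x^4 w]. *)
  assert (hdiff : (r - q) * ((1 - 2 * x) * (r + q)) = x ^ 4 * w).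
  { transitivity (r ^ 2 * (1 - 2 * x) - q ^ 2 * (1 - 2 * x)); [ring |].
    rewrite e; unfold q, w; field. }
  assert (hd : 1 <= (1 - 2 * x) * (r + q)) by nra.
  assert (h4 : 0 <= x ^ 4) by (apply pow_le; lra).
  rewrite Rabs_le_between; split; nra.
Qed.

Lemma Rabs_div_linear_le (N D K e : R) :
  0 < e -> 8 * e <= D -> Rabs N <= K * e ^ 3 -> Rabs (N / (4 * D)) <= Rabs K / 32 * e ^ 2.
Proof.
  intros he hD hN; unfold Rdiv; rewrite Rabs_mult, Rabs_inv, (Rabs_right (4 * D)) by lra.
  apply (Rmult_le_reg_r (4 * D)); [lra |]; field_simplify; [| lra].
  assert (K * e ^ 3 <= Rabs K * e ^ 3)
    by (apply Rmult_le_compat_r; [apply pow_le; lra | apply Rle_abs]).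
  assert (Rabs K * e ^ 2 * (8 * e) <= Rabs K * e ^ 2 * D)
    by (apply Rmult_le_compat_l; [apply Rmult_le_pos; [apply Rabs_pos | apply pow2_ge_0] | lra]).
  lra.
Qed.

Lemma increment_lower (x x' l l' e e' c p K : R) :
  0 <= p -> 0 <= K -> 0 <= e' <= e -> K * e <= 1 / 4 -> e <= l - l' ->
  Rabs (x - l - (c + p * e)) <= K * e ^ 2 -> Rabs (x' - l' - (c + p * e')) <= K * e' ^ 2 ->
  e / 2 <= x - x'.
Proof.
  intros hp hK he hKe hl hx hx'; apply Rabs_le_between in hx; apply Rabs_le_between in hx'.
  assert (K * e' ^ 2 <= K * e ^ 2) by (apply Rmult_le_compat_l; [lra | apply pow_incr; lra]).
  assert (p * e' <= p * e) by (apply Rmult_le_compat_l; lra).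
  assert (K * e ^ 2 <= e / 4) by nra.
  lra.
Qed.

Lemma slope_near_minus_one (x x' y y' c e d : R) :
  0 < d -> d <= x - x' -> Rabs (x + y - c) <= e -> Rabs (x' + y' - c) <= e ->
  Rabs ((y - y') / (x - x') - -1) <= 2 * e / d.
Proof.
  intros hd hx h1 h2.
  replace ((y - y') / (x - x') - -1) with (((x + y - c) - (x' + y' - c)) / (x - x'))
    by (field; lra).
  unfold Rdiv; rewrite Rabs_mult, Rabs_inv, (Rabs_right (x - x')) by lra.
  apply Rmult_le_compat; [apply Rabs_pos | apply Rlt_le, Rinv_0_lt_compat; lra | |
    apply Rinv_le_contravar; lra].
  eapply Rle_trans; [apply Rabs_triang |]; rewrite Rabs_Ropp; lra.
Qed.

(* Coquelicot's integration lemmas produce equalities in the carrier of a normed module, which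
   [ring] and [field] do not recognise as equalities in [R]. *)
Ltac change_eq_in_R := match goal with |- ?a = ?b => change (a = b :> R) end.

Ltac rewrite_Derive H :=
  match type of H with
  | is_derive ?f ?x ?l =>
      replace (Derive (fun y => f y) x) with l by (symmetry; apply is_derive_unique; exact H)
  end.

Lemma is_derive_rotate (a b : R -> R) (da db t : R) :
  is_derive a t da -> is_derive b t db ->
  is_derive (fun s => a s * cos s - b s * sin s) t ((da - b t) * cos t - (db + a t) * sin t) /\
  is_derive (fun s => a s * sin s + b s * cos s) t ((da - b t) * sin t + (db + a t) * cos t).
Proof.
  intros ha hb; split; auto_derive; try (repeat split; eexists; eassumption);
    rewrite_Derive ha; rewrite_Derive hb; ring.
Qed.

Lemma is_derive_sqrt_cube_div (S C : R -> R) (dS dC t : R) :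
  0 < S t -> C t <> 0 -> is_derive S t dS -> is_derive C t dC ->
  is_derive (fun s => sqrt (S s) ^ 3 / C s) t
    (sqrt (S t) * (3 / 2 * dS * C t - S t * dC) / C t ^ 2).
Proof.
  intros hS hC dSt dCt; auto_derive; [repeat split; try eexists; eauto |].
  rewrite_Derive dSt; rewrite_Derive dCt.
  assert (hq : 0 < sqrt (S t)) by (apply sqrt_lt_R0, hS).
  assert (hsq := sqrt_sqrt (S t) (Rlt_le _ _ hS)); set (q := sqrt (S t)) in *.
  rewrite <- hsq; field; lra.
Qed.

Lemma ex_RInt_below (f : R -> R) c a b :
  (forall x, x < c -> continuous f x) -> a < c -> b < c -> ex_RInt f a b.
Proof.
  intros hf ha hb; apply (@ex_RInt_continuous R_CompleteNormedModule).
  intros x [_ hx]; apply hf; eapply Rle_lt_trans; [exact hx | now apply Rmax_lub_lt].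
Qed.

(** * Asymptotic expansions as t -> -oo *)

Local Notation at_minus_infty := (Rbar_locally m_infty).

Lemma at_minus_infty_lt M : at_minus_infty (fun t => t < M).
Proof. now exists M. Qed.

Lemma at_minus_infty_locally (P : R -> Prop) :
  at_minus_infty P -> at_minus_infty (fun t => locally t P).
Proof.
  intros [M hM]; exists M; intros t ht.
  apply (filter_imp (fun s => s < M)); [exact hM | exact (open_lt _ _ ht)].
Qed.

Lemma at_minus_infty_shift (P : R -> Prop) c : 0 <= c -> at_minus_infty P ->
  at_minus_infty (fun t => P (t - c)).
Proof. intros hc [M hM]; exists M; intros t ht; apply hM; lra. Qed.

Lemma is_lim_eventually_const (f : R -> R) (c l : R) :
  at_minus_infty (fun t => f t = c) -> is_lim f m_infty l -> c = l.
Proof.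
  intros hc hl; apply (is_lim_ext_loc f (fun _ => c)) in hl; [| exact hc].
  apply is_lim_unique in hl; rewrite (is_lim_unique _ _ _ (is_lim_const c m_infty)) in hl.
  now injection hl.
Qed.

Definition bounded_near (f : R -> R) : Prop := exists M, at_minus_infty (fun t => Rabs (f t) <= M).

Lemma bounded_near_const c : bounded_near (fun _ => c).
Proof. exists (Rabs c); apply filter_forall; intros; lra. Qed.

Lemma bounded_near_plus f g : bounded_near f -> bounded_near g -> bounded_near (fun t => f t + g t).
Proof.
  intros [M hM] [N hN]; exists (M + N); generalize (filter_and _ _ hM hN); apply filter_imp.
  intros t [hf hg]; eapply Rle_trans; [apply Rabs_triang | lra].
Qed.

Lemma bounded_near_opp f : bounded_near f -> bounded_near (fun t => - f t).
Proof. intros [M hM]; exists M; revert hM; apply filter_imp; intros t; rewrite Rabs_Ropp; auto. Qed.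

Lemma bounded_near_mult f g : bounded_near f -> bounded_near g -> bounded_near (fun t => f t * g t).
Proof.
  intros [M hM] [N hN]; exists (M * N); generalize (filter_and _ _ hM hN); apply filter_imp.
  intros t [hf hg]; rewrite Rabs_mult; apply Rmult_le_compat; auto using Rabs_pos.
Qed.

Ltac bounded :=
  lazymatch goal with
  | |- bounded_near (fun t => @?f t + @?g t) => apply (bounded_near_plus f g); bounded
  | |- bounded_near (fun t => @?f t - @?g t) =>
      apply (bounded_near_plus f (fun t => - g t)); [bounded | apply (bounded_near_opp g); bounded]
  | |- bounded_near (fun t => @?f t * @?g t) => apply (bounded_near_mult f g); bounded
  | |- bounded_near (fun t => - @?f t) => apply (bounded_near_opp f); bounded
  | |- bounded_near (fun t => @?f t ^ S ?n) =>
      change (bounded_near (fun t => f t * f t ^ n)); bounded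
  | |- bounded_near (fun t => @?f t ^ 0) => exact (bounded_near_const 1)
  | |- bounded_near _ => first [apply bounded_near_const | eassumption]
  end.

Section Expansions.

Variable h : R -> R.

Hypothesis h_pos : at_minus_infty (fun t => 0 < h t).

Hypothesis h_small : forall eps, 0 < eps -> at_minus_infty (fun t => h t < eps).

Lemma h_in_01 : at_minus_infty (fun t => 0 < h t <= 1).
Proof.
  generalize (filter_and _ _ h_pos (h_small 1 Rlt_0_1)); apply filter_imp; intros t []; lra.
Qed.

Lemma bounded_near_h : bounded_near h.
Proof.
  exists 1; generalize h_in_01; apply filter_imp; intros t ht; rewrite Rabs_right; lra.
Qed.

Lemma h_mult_small K eps : 0 <= K -> 0 < eps -> at_minus_infty (fun t => K * h t < eps).
Proof.
  intros hK he; assert (hsmall := h_small (eps / (K + 1)) ltac:(apply Rdiv_lt_0_compat; lra)).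
  generalize (filter_and _ _ h_pos hsmall); apply filter_imp; intros t [hp hs].
  apply (Rmult_lt_compat_l (K + 1)) in hs; [| lra].
  replace ((K + 1) * (eps / (K + 1))) with eps in hs by (field; lra); nra.
Qed.

Definition has_expansion (Q : R -> R) (a b c d : R) : Prop :=
  exists e, bounded_near e
  /\ at_minus_infty (fun t => Q t = a + b * h t + c * h t ^ 2 + d * h t ^ 3 + h t ^ 4 * e t).

Lemma has_expansion_ext Q a b c d a' b' c' d' : has_expansion Q a b c d ->
  a = a' -> b = b' -> c = c' -> d = d' -> has_expansion Q a' b' c' d'.
Proof. now intros hQ -> -> -> ->. Qed.

Lemma has_expansion_const c : has_expansion (fun _ => c) c 0 0 0.
Proof.
  exists (fun _ => 0); split; [apply bounded_near_const | apply filter_forall; intros; ring].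
Qed.

Lemma has_expansion_h : has_expansion h 0 1 0 0.
Proof.
  exists (fun _ => 0); split; [apply bounded_near_const | apply filter_forall; intros; ring].
Qed.

Lemma has_expansion_plus P Q a b c d a' b' c' d' :
  has_expansion P a b c d -> has_expansion Q a' b' c' d' ->
  has_expansion (fun t => P t + Q t) (a + a') (b + b') (c + c') (d + d').
Proof.
  intros [e1 [B1 E1]] [e2 [B2 E2]]; exists (fun t => e1 t + e2 t); split; [bounded |].
  generalize (filter_and _ _ E1 E2); apply filter_imp; intros t [-> ->]; ring.
Qed.

Lemma has_expansion_opp P a b c d :
  has_expansion P a b c d -> has_expansion (fun t => - P t) (- a) (- b) (- c) (- d).
Proof.
  intros [e [B E]]; exists (fun t => - e t); split; [bounded |].
  revert E; apply filter_imp; intros t ->; ring.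
Qed.

Lemma has_expansion_minus P Q a b c d a' b' c' d' :
  has_expansion P a b c d -> has_expansion Q a' b' c' d' ->
  has_expansion (fun t => P t - Q t) (a - a') (b - b') (c - c') (d - d').
Proof.
  intros hP hQ; apply (has_expansion_plus P (fun t => - Q t)); [| apply has_expansion_opp]; auto.
Qed.

Lemma has_expansion_mult P Q a b c d a' b' c' d' :
  has_expansion P a b c d -> has_expansion Q a' b' c' d' ->
  has_expansion (fun t => P t * Q t)
    (a * a') (a * b' + b * a') (a * c' + b * b' + c * a') (a * d' + b * c' + c * b' + d * a').
Proof.
  intros [e1 [B1 E1]] [e2 [B2 E2]]; pose proof bounded_near_h.
  exists (fun t => (b * d' + c * c' + d * b') + (c * d' + d * c') * h t + d * d' * h t ^ 2
     + e1 t * (a' + b' * h t + c' * h t ^ 2 + d' * h t ^ 3)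
     + e2 t * (a + b * h t + c * h t ^ 2 + d * h t ^ 3) + h t ^ 4 * e1 t * e2 t).
  split; [bounded |].
  generalize (filter_and _ _ E1 E2); apply filter_imp; intros t [-> ->]; ring.
Qed.

Lemma has_expansion_pow_S P n a b c d :
  has_expansion (fun t => P t * P t ^ n) a b c d -> has_expansion (fun t => P t ^ S n) a b c d.
Proof. trivial. Qed.

Lemma has_expansion_perturb P Q a b c d M :
  has_expansion P a b c d -> at_minus_infty (fun t => Rabs (Q t - P t) <= M * h t ^ 4) ->
  has_expansion Q a b c d.
Proof.
  intros [e [B E]] hQP; exists (fun t => e t + (Q t - P t) / h t ^ 4); split.
  - apply bounded_near_plus; [exact B |]; exists M.
    generalize (filter_and _ _ hQP h_pos); apply filter_imp; intros t [hb hp].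
    assert (h4 : 0 < h t ^ 4) by (apply pow_lt, hp).
    unfold Rdiv; rewrite Rabs_mult, Rabs_inv, (Rabs_right (h t ^ 4)) by lra.
    apply (Rmult_le_reg_r (h t ^ 4)); [exact h4 |]; field_simplify; lra.
  - generalize (filter_and _ _ E h_pos); apply filter_imp; intros t [ht hp].
    assert (h4 : 0 < h t ^ 4) by (apply pow_lt, hp).
    rewrite ht; field; lra.
Qed.

Lemma has_expansion_add_remainder P Q a b c d e :
  has_expansion P a b c d -> bounded_near e ->
  at_minus_infty (fun t => Q t = P t + h t ^ 4 * e t) -> has_expansion Q a b c d.
Proof.
  intros hP [M hM] hQ; apply (has_expansion_perturb P Q a b c d M hP).
  generalize (filter_and _ _ (filter_and _ _ hM hQ) h_pos); apply filter_imp; intros t [[he ->] hp].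
  replace (P t + h t ^ 4 * e t - P t) with (h t ^ 4 * e t) by ring.
  rewrite Rabs_mult, Rabs_right by (apply Rle_ge, pow_le; lra); rewrite Rmult_comm.
  apply Rmult_le_compat_r; [apply pow_le; lra | exact he].
Qed.

Lemma has_expansion_O2 Q a b c d : has_expansion Q a b c d ->
  exists K, 0 <= K /\ at_minus_infty (fun t => Rabs (Q t - (a + b * h t)) <= K * h t ^ 2).
Proof.
  intros [e [[M hM] E]]; exists (Rabs c + Rabs d + Rabs M).
  split; [pose proof (Rabs_pos c); pose proof (Rabs_pos d); pose proof (Rabs_pos M); lra |].
  generalize (filter_and _ _ (filter_and _ _ hM E) h_in_01); apply filter_imp.
  intros t [[he ->] hh]; set (s := h t) in *.
  replace (a + b * s + c * s ^ 2 + d * s ^ 3 + s ^ 4 * e t - (a + b * s))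
    with (s ^ 2 * (c + d * s + s ^ 2 * e t)) by ring.
  rewrite Rabs_mult, (Rabs_right (s ^ 2)) by (apply Rle_ge, pow2_ge_0); rewrite Rmult_comm.
  apply Rmult_le_compat_r; [apply pow2_ge_0 |].
  eapply Rle_trans; [apply Rabs_triang |].
  eapply Rle_trans; [apply Rplus_le_compat_r, Rabs_triang |].
  rewrite !Rabs_mult, (Rabs_right s), (Rabs_right (s ^ 2)) by (try apply Rle_ge, pow2_ge_0; lra).
  assert (s ^ 2 <= 1) by nra; pose proof (Rabs_pos d); pose proof (Rabs_pos (e t)).
  pose proof (Rle_abs M); nra.
Qed.

Lemma has_expansion_O4 Q d : has_expansion Q 0 0 0 d ->
  exists K, at_minus_infty (fun t => Rabs (Q t - d * h t ^ 3) <= K * h t ^ 4).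
Proof.
  intros [e [[M hM] E]]; exists M.
  generalize (filter_and _ _ (filter_and _ _ hM E) h_pos); apply filter_imp.
  intros t [[he ->] hp].
  replace (0 + 0 * h t + 0 * h t ^ 2 + d * h t ^ 3 + h t ^ 4 * e t - d * h t ^ 3)
    with (h t ^ 4 * e t) by ring.
  rewrite Rabs_mult, (Rabs_right (h t ^ 4)) by (apply Rle_ge, pow_le; lra).
  rewrite Rmult_comm; apply Rmult_le_compat_r; [apply pow_le; lra | exact he].
Qed.

Lemma ln_first_order X a b K : 0 < a -> 0 <= K ->
  at_minus_infty (fun t => Rabs (X t - (a + b * h t)) <= K * h t ^ 2) ->
  exists K', at_minus_infty (fun t => Rabs (ln (X t) - (ln a + b / a * h t)) <= K' * h t ^ 2).
Proof.
  intros ha hK hX; exists (2 * ((Rabs b + K) / a) ^ 2 + K / a).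
  assert (hc : 0 <= (Rabs b + K) / a) by (apply Rdiv_le_0_compat; [pose proof (Rabs_pos b) |]; lra).
  generalize (filter_and _ _ (filter_and _ _ hX h_in_01) (h_mult_small _ (1 / 2) hc ltac:(lra))).
  apply filter_imp; intros t [[hx hh] hs]; apply ln_first_order_at; lra.
Qed.

Lemma has_expansion_pos Q a b c d : 0 < a -> has_expansion Q a b c d ->
  at_minus_infty (fun t => 0 < Q t).
Proof.
  intros ha hQ; destruct (has_expansion_O2 _ _ _ _ _ hQ) as [K [hK E]].
  assert (hc : 0 <= Rabs b + K) by (pose proof (Rabs_pos b); lra).
  generalize (filter_and _ _ (filter_and _ _ E h_in_01) (h_mult_small _ a hc ha)).
  apply filter_imp; intros t [[hq hh] hs]; apply Rabs_le_between in hq.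
  assert (b * h t >= - (Rabs b * h t)) by (pose proof (Rle_abs (- b)); rewrite Rabs_Ropp in *; nra).
  assert (K * h t ^ 2 <= K * h t) by (apply Rmult_le_compat_l; nra); lra.
Qed.

Lemma has_expansion_linear_lower Q b c d : 0 < b -> has_expansion Q 0 b c d ->
  at_minus_infty (fun t => b / 2 * h t <= Q t).
Proof.
  intros hb hQ; destruct (has_expansion_O2 _ _ _ _ _ hQ) as [K [hK E]].
  generalize (filter_and _ _ (filter_and _ _ E h_in_01) (h_mult_small _ (b / 2) hK ltac:(lra))).
  apply filter_imp; intros t [[hq hh] hs]; apply Rabs_le_between in hq; nra.
Qed.

Lemma has_expansion_cubic Q d : d < 0 -> has_expansion Q 0 0 0 d ->
  exists K, at_minus_infty (fun t => Q t < 0 /\ Rabs (Q t) <= K * h t ^ 3).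
Proof.
  intros hd hQ; destruct (has_expansion_O4 _ _ hQ) as [K E]; exists (Rabs K - d).
  assert (hsmall := h_mult_small (Rabs K) (- d) (Rabs_pos K) ltac:(lra)).
  generalize (filter_and _ _ (filter_and _ _ E h_in_01) hsmall).
  apply filter_imp; intros t [[hq hh] hs]; apply Rabs_le_between in hq.
  assert (h3 : 0 < h t ^ 3) by (apply pow_lt; lra).
  assert (K * h t ^ 4 <= Rabs K * h t * h t ^ 3).
  { replace (Rabs K * h t * h t ^ 3) with (Rabs K * h t ^ 4) by ring.
    apply Rmult_le_compat_r; [apply pow_le; lra | apply Rle_abs]. }
  assert (Rabs K * h t * h t ^ 3 < - d * h t ^ 3) by (apply Rmult_lt_compat_r; lra).
  assert (Rabs K * h t * h t ^ 3 <= Rabs K * h t ^ 3) by (pose proof (Rabs_pos K); nra).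
  split; [lra | rewrite Rabs_left; lra].
Qed.

End Expansions.

(** * The clothoid *)

Lemma delta_pos : 0 < delta.
Proof. unfold delta; pose proof PI_RGT_0; lra. Qed.

Lemma sin_delta : sin delta = sqrt 3 / 2.
Proof. unfold delta; rewrite <- sin_2PI3; f_equal; field. Qed.

Lemma cos_delta : cos delta = - / 2.
Proof.
  unfold delta; replace (2 * PI / 3) with (PI - PI / 3) by field.
  rewrite Rtrigo_facts.cos_pi_minus, cos_PI3; field.
Qed.

Lemma sin_delta_sqr : sin delta ^ 2 = 3 / 4.
Proof.
  rewrite sin_delta; replace ((sqrt 3 / 2) ^ 2) with ((sqrt 3)² / 4) by (unfold Rsqr; field).
  rewrite Rsqr_sqrt; lra.
Qed.

Lemma sin_delta_pos : 0 < sin delta.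
Proof. rewrite sin_delta; pose proof Rlt_sqrt3_0; lra. Qed.

Lemma sin_delta_lt_1 : sin delta < 1.
Proof. pose proof sin_delta_sqr; pose proof sin_delta_pos; nra. Qed.

(* [P' = rhoP * e^{i theta}]: [rhoP] is the radius of curvature of the clothoid. *)
Definition rhoP (t : R) : R := / sqrt (1 - 2 * t).

Lemma rhoP_pos t : t < /2 -> 0 < rhoP t.
Proof. intro ht; apply Rinv_0_lt_compat, sqrt_lt_R0; lra. Qed.

Lemma rhoP_sqr t : t < /2 -> rhoP t ^ 2 = / (1 - 2 * t).
Proof. intro ht; unfold rhoP; rewrite pow_inv, <- Rsqr_pow2, Rsqr_sqrt; lra. Qed.

Lemma rhoP_le s t : s <= t -> t < /2 -> rhoP s <= rhoP t.
Proof.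
  intros hst ht; apply Rinv_le_contravar; [apply sqrt_lt_R0 | apply sqrt_le_1_alt]; lra.
Qed.

Lemma is_derive_rhoP t : t < /2 -> is_derive rhoP t (rhoP t ^ 3).
Proof.
  intro ht; unfold rhoP; pose proof (sqrt_lt_R0 (1 - 2 * t) ltac:(lra)).
  auto_derive; replace (1 + - (2 * t)) with (1 - 2 * t) by ring; [repeat split; lra |].
  field; lra.
Qed.

Ltac continuous_below_half :=
  apply (@ex_derive_continuous R_AbsRing R_NormedModule); unfold rhoP; auto_derive;
  repeat split; try apply Rgt_not_eq, sqrt_lt_R0; lra.

Section IntegralsOverSqrt.

Variable g : R -> R.

Hypothesis g_derivable : forall x, ex_derive g x.

Let F (psi : R) : R := g psi / sqrt (1 - 2 * psi).

Lemma ex_RInt_div_sqrt a b : a < /2 -> b < /2 -> ex_RInt F a b.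
Proof.
  apply ex_RInt_below; intros x hx; unfold F.
  apply (@ex_derive_continuous R_AbsRing R_NormedModule); auto_derive.
  repeat split; try apply g_derivable; try apply Rgt_not_eq, sqrt_lt_R0; lra.
Qed.

Lemma is_derive_RInt_div_sqrt t : t < /2 -> is_derive (fun s => RInt F 0 s) t (rhoP t * g t).
Proof.
  intro ht; replace (rhoP t * g t) with (F t)
    by (unfold F, rhoP; field; apply Rgt_not_eq, sqrt_lt_R0; lra).
  apply (is_derive_RInt F _ 0).
  - apply (filter_imp (fun x => x < /2)); [| exact (open_lt _ _ ht)].
    intros x hx; apply (RInt_correct (V := R_CompleteNormedModule)), ex_RInt_div_sqrt; lra.
  - apply (@ex_derive_continuous R_AbsRing R_NormedModule); unfold F; auto_derive.
    repeat split; try apply g_derivable; try apply Rgt_not_eq, sqrt_lt_R0; lra.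
Qed.

Lemma RInt_div_sqrt_Chasles a b : a < /2 -> b < /2 -> RInt F 0 b - RInt F 0 a = RInt F a b.
Proof.
  intros ha hb; rewrite <- (RInt_Chasles F 0 a b) by (apply ex_RInt_div_sqrt; lra).
  unfold plus; simpl; ring.
Qed.

End IntegralsOverSqrt.

Lemma ex_derive_cos x : ex_derive cos x.
Proof. auto_derive; trivial. Qed.

Lemma ex_derive_sin x : ex_derive sin x.
Proof. auto_derive; trivial. Qed.

Lemma is_derive_Px t : t < /2 -> is_derive Px t (rhoP t * cos t).
Proof. exact (is_derive_RInt_div_sqrt cos ex_derive_cos t). Qed.

Lemma is_derive_Py t : t < /2 -> is_derive Py t (rhoP t * sin t).
Proof. exact (is_derive_RInt_div_sqrt sin ex_derive_sin t). Qed.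

Lemma chord_component phi t : t < /2 - delta ->
  Vx t * cos phi + Vy t * sin phi = RInt (fun psi => rhoP psi * cos (psi - phi)) t (t + delta).
Proof.
  intro ht; pose proof delta_pos.
  unfold Vx, Vy, Px, Py; rewrite !(RInt_div_sqrt_Chasles _ ex_derive_cos),
    !(RInt_div_sqrt_Chasles _ ex_derive_sin) by lra.
  assert (Ic := RInt_correct (V := R_CompleteNormedModule) _ _ _
    (ex_RInt_div_sqrt cos ex_derive_cos t (t + delta) ltac:(lra) ltac:(lra))).
  assert (Is := RInt_correct (V := R_CompleteNormedModule) _ _ _
    (ex_RInt_div_sqrt sin ex_derive_sin t (t + delta) ltac:(lra) ltac:(lra))).
  assert (I := is_RInt_plus _ _ _ _ _ _ (is_RInt_scal _ _ _ (cos phi) _ Ic)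
                                        (is_RInt_scal _ _ _ (sin phi) _ Is)).
  symmetry; apply is_RInt_unique; unfold plus, scal in I; simpl in I; unfold mult in I; simpl in I.
  rewrite (Rmult_comm _ (cos phi)), (Rmult_comm _ (sin phi)).
  eapply is_RInt_ext; [| exact I].
  intros x hx; rewrite cos_minus; unfold rhoP; change_eq_in_R; field.
  apply Rgt_not_eq, sqrt_lt_R0; destruct hx as [_ hx]; rewrite Rmax_right in hx; lra.
Qed.

(* An antiderivative of [(rhoP - 105 rhoP^9) cos (. - phi)], from four integrations by parts
   using [rhoP' = rhoP^3]. *)
Definition prim_cos (phi psi : R) : R :=
  rhoP psi * sin (psi - phi) + rhoP psi ^ 3 * cos (psi - phi)
  - 3 * rhoP psi ^ 5 * sin (psi - phi) - 15 * rhoP psi ^ 7 * cos (psi - phi).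

Lemma is_derive_prim_cos phi psi : psi < /2 ->
  is_derive (prim_cos phi) psi ((rhoP psi - 105 * rhoP psi ^ 9) * cos (psi - phi)).
Proof.
  intro h; assert (hu := is_derive_rhoP psi h); unfold prim_cos; auto_derive.
  - repeat split; eexists; exact hu.
  - rewrite_Derive hu; unfold Rminus; ring.
Qed.

Lemma ex_RInt_rhoP_remainder phi a b : a < /2 -> b < /2 ->
  ex_RInt (fun psi => 105 * rhoP psi ^ 9 * cos (psi - phi)) a b.
Proof. apply ex_RInt_below; intros; continuous_below_half. Qed.

Lemma RInt_rhoP_cos phi a b : a < /2 -> b < /2 ->
  RInt (fun psi => rhoP psi * cos (psi - phi)) a b
  = prim_cos phi b - prim_cos phi a + RInt (fun psi => 105 * rhoP psi ^ 9 * cos (psi - phi)) a b.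
Proof.
  intros ha hb.
  assert (hab : forall x, Rmin a b <= x <= Rmax a b -> x < /2).
  { intros x [_ hx]; eapply Rle_lt_trans; [exact hx | now apply Rmax_lub_lt]. }
  assert (Ip : is_RInt (fun x => (rhoP x - 105 * rhoP x ^ 9) * cos (x - phi)) a b
                 (minus (prim_cos phi b) (prim_cos phi a))).
  { apply (is_RInt_derive (V := R_CompleteNormedModule) (prim_cos phi));
      intros x hx; specialize (hab x hx);
      [apply is_derive_prim_cos | continuous_below_half]; lra. }
  assert (Ir := RInt_correct (V := R_CompleteNormedModule) _ _ _
    (ex_RInt_rhoP_remainder phi a b ha hb)).
  apply is_RInt_unique; eapply is_RInt_ext; [| exact (is_RInt_plus _ _ _ _ _ _ Ip Ir)].
  intros x _; unfold plus, minus, opp; simpl.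
  change_eq_in_R; ring.
Qed.

Lemma RInt_rhoP_cos_remainder phi a b : a <= b -> b < /2 ->
  Rabs (RInt (fun psi => 105 * rhoP psi ^ 9 * cos (psi - phi)) a b) <= (b - a) * (105 * rhoP b ^ 9).
Proof.
  intros hab hb.
  apply (norm_RInt_le_const (V := R_NormedModule)
           (fun psi => 105 * rhoP psi ^ 9 * cos (psi - phi)));
    [exact hab | |].
  - intros x hx; change (Rabs (105 * rhoP x ^ 9 * cos (x - phi)) <= 105 * rhoP b ^ 9).
    assert (hu : 0 < rhoP x) by (apply rhoP_pos; lra).
    assert (Rabs (cos (x - phi)) <= 1) by (apply Rabs_le, COS_bound).
    assert (rhoP x ^ 9 <= rhoP b ^ 9) by (apply pow_incr; split; [| apply rhoP_le]; lra).
    assert (0 <= rhoP x ^ 9) by (apply pow_le; lra).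
    rewrite !Rabs_mult, Rabs_right, (Rabs_right (rhoP x ^ 9)) by lra.
    pose proof (Rabs_pos (cos (x - phi))); nra.
  - apply (RInt_correct (V := R_CompleteNormedModule)), ex_RInt_rhoP_remainder; lra.
Qed.

(** * The isoptic in the tangent frame of the clothoid *)

Lemma sin_delta_frame t : sin (t + delta) * cos t - cos (t + delta) * sin t = sin delta.
Proof. rewrite <- sin_minus; f_equal; ring. Qed.

Lemma cos_delta_frame t : cos (t + delta) * cos t + sin (t + delta) * sin t = cos delta.
Proof. rewrite <- cos_minus; f_equal; ring. Qed.

(* The velocity of the isoptic is [I' = (aI + i kI) e^{i theta}]. *)
Definition aI (t : R) : R := / sin delta * (Vx t * cos (t + delta) + Vy t * sin (t + delta)).

Definition daI (t : R) : R := (rhoP (t + delta) - cos delta * rhoP t) / sin delta - kI t.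

Lemma aI_RInt t : t < /2 - delta ->
  aI t = / sin delta * RInt (fun psi => rhoP psi * cos (psi - (t + delta))) t (t + delta).
Proof. intro ht; unfold aI; rewrite chord_component by exact ht; reflexivity. Qed.

Lemma kI_RInt t : t < /2 - delta ->
  kI t = / sin delta * RInt (fun psi => rhoP psi * cos (psi - (t + delta - PI / 2))) t (t + delta).
Proof.
  intro ht; unfold kI; rewrite <- chord_component by exact ht.
  rewrite cos_minus, sin_minus, cos_PI2, sin_PI2; ring_simplify; reflexivity.
Qed.

Lemma is_derive_kI t : t < /2 - delta -> is_derive kI t (aI t - rhoP t).
Proof.
  intro ht; pose proof delta_pos; pose proof sin_delta_pos.
  assert (hx := is_derive_Px t ltac:(lra)); assert (hx' := is_derive_Px (t + delta) ltac:(lra)).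
  assert (hy := is_derive_Py t ltac:(lra)); assert (hy' := is_derive_Py (t + delta) ltac:(lra)).
  unfold kI, aI, Vx, Vy; auto_derive.
  - repeat split; try apply Rgt_not_eq; trivial; eexists; eassumption.
  - rewrite_Derive hx; rewrite_Derive hx'; rewrite_Derive hy; rewrite_Derive hy'.
    apply (lincomb_eq _ _ _ _ (- rhoP t / sin delta) (sin_delta_frame t)); field; lra.
Qed.

Lemma is_derive_aI t : t < /2 - delta -> is_derive aI t (daI t).
Proof.
  intro ht; pose proof delta_pos; pose proof sin_delta_pos.
  assert (hx := is_derive_Px t ltac:(lra)); assert (hx' := is_derive_Px (t + delta) ltac:(lra)).
  assert (hy := is_derive_Py t ltac:(lra)); assert (hy' := is_derive_Py (t + delta) ltac:(lra)).
  unfold daI, kI, aI, Vx, Vy; auto_derive.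
  - repeat split; try apply Rgt_not_eq; trivial; eexists; eassumption.
  - rewrite_Derive hx; rewrite_Derive hx'; rewrite_Derive hy; rewrite_Derive hy'.
    apply (lincomb_eq _ _ _ _ (rhoP (t + delta) / sin delta) (sin2_cos2_pow (t + delta))).
    apply (lincomb_eq _ _ _ _ (- rhoP t / sin delta) (cos_delta_frame t)); field; lra.
Qed.

Lemma is_derive_daI t : t < /2 - delta ->
  is_derive daI t ((rhoP (t + delta) ^ 3 - cos delta * rhoP t ^ 3) / sin delta - (aI t - rhoP t)).
Proof.
  intro ht; pose proof delta_pos; pose proof sin_delta_pos.
  assert (hu := is_derive_rhoP t ltac:(lra)); assert (hv := is_derive_rhoP (t + delta) ltac:(lra)).
  assert (hk := is_derive_kI t ht).
  unfold daI; auto_derive.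
  - repeat split; try apply Rgt_not_eq; trivial; eexists; eassumption.
  - rewrite_Derive hu; rewrite_Derive hv; rewrite_Derive hk; field; lra.
Qed.

Lemma is_derive_Ix t : t < /2 - delta -> is_derive Ix t (aI t * cos t - kI t * sin t).
Proof.
  intro ht; pose proof delta_pos.
  assert (hp := is_derive_Px t ltac:(lra)); assert (hk := is_derive_kI t ht).
  unfold Ix; auto_derive; [repeat split; eexists; eassumption |].
  rewrite_Derive hp; rewrite_Derive hk; ring.
Qed.

Lemma is_derive_Iy t : t < /2 - delta -> is_derive Iy t (aI t * sin t + kI t * cos t).
Proof.
  intro ht; pose proof delta_pos.
  assert (hp := is_derive_Py t ltac:(lra)); assert (hk := is_derive_kI t ht).
  unfold Iy; auto_derive; [repeat split; eexists; eassumption |].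
  rewrite_Derive hp; rewrite_Derive hk; ring.
Qed.

Lemma Derive_Derive_Ix t : t < /2 - delta ->
  Derive (Derive Ix) t = (daI t - kI t) * cos t - (aI t - rhoP t + aI t) * sin t.
Proof.
  intro ht; rewrite (Derive_ext_loc _ (fun s => aI s * cos s - kI s * sin s)).
  - apply is_derive_unique, (is_derive_rotate aI kI);
      [apply is_derive_aI | apply is_derive_kI]; lra.
  - apply (filter_imp (fun s => s < /2 - delta)); [| exact (open_lt _ _ ht)].
    intros s hs; apply is_derive_unique, is_derive_Ix, hs.
Qed.

Lemma Derive_Derive_Iy t : t < /2 - delta ->
  Derive (Derive Iy) t = (daI t - kI t) * sin t + (aI t - rhoP t + aI t) * cos t.
Proof.
  intro ht; rewrite (Derive_ext_loc _ (fun s => aI s * sin s + kI s * cos s)).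
  - apply is_derive_unique, (is_derive_rotate aI kI);
      [apply is_derive_aI | apply is_derive_kI]; lra.
  - apply (filter_imp (fun s => s < /2 - delta)); [| exact (open_lt _ _ ht)].
    intros s hs; apply is_derive_unique, is_derive_Iy, hs.
Qed.

Definition speed2 (t : R) : R := aI t ^ 2 + kI t ^ 2.

Definition cross (t : R) : R := aI t * (2 * aI t - rhoP t) - kI t * (daI t - kI t).

Lemma speedI_eq t : t < /2 - delta -> speedI t = sqrt (speed2 t).
Proof.
  intro ht; unfold speedI.
  rewrite (is_derive_unique _ _ _ (is_derive_Ix t ht)),
    (is_derive_unique _ _ _ (is_derive_Iy t ht)).
  now rewrite rotate_sqr_norm.
Qed.

Lemma crossI_eq t : t < /2 - delta -> crossI t = cross t.
Proof.
  intro ht; unfold crossI, cross.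
  rewrite (is_derive_unique _ _ _ (is_derive_Ix t ht)),
    (is_derive_unique _ _ _ (is_derive_Iy t ht)),
    Derive_Derive_Ix, Derive_Derive_Iy, rotate_cross by exact ht; ring.
Qed.

Lemma rhoI_eq t : t < /2 - delta -> rhoI t = sqrt (speed2 t) ^ 3 / Rabs (cross t).
Proof. intro ht; unfold rhoI; rewrite speedI_eq, crossI_eq by exact ht; reflexivity. Qed.

Definition dspeed2 (t : R) : R := 2 * (aI t * daI t + kI t * (aI t - rhoP t)).

Definition dcross (t : R) : R :=
  daI t * (2 * aI t - rhoP t) + aI t * (2 * daI t - rhoP t ^ 3)
  - (aI t - rhoP t) * (daI t - kI t)
  - kI t * ((rhoP (t + delta) ^ 3 - cos delta * rhoP t ^ 3) / sin delta - 2 * (aI t - rhoP t)).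

Lemma is_derive_speed2 t : t < /2 - delta -> is_derive speed2 t (dspeed2 t).
Proof.
  intro ht; assert (ha := is_derive_aI t ht); assert (hk := is_derive_kI t ht).
  unfold speed2; auto_derive; [repeat split; eexists; eassumption |].
  rewrite_Derive ha; rewrite_Derive hk; unfold dspeed2; ring.
Qed.

Lemma is_derive_cross t : t < /2 - delta -> is_derive cross t (dcross t).
Proof.
  intro ht; pose proof delta_pos.
  assert (ha := is_derive_aI t ht); assert (hk := is_derive_kI t ht).
  assert (hd := is_derive_daI t ht); assert (hu := is_derive_rhoP t ltac:(lra)).
  unfold cross; auto_derive; [repeat split; eexists; eassumption |].
  rewrite_Derive ha; rewrite_Derive hk; rewrite_Derive hd; rewrite_Derive hu; unfold dcross; ring.
Qed.

Lemma Derive_rhoI t : locally t (fun s => s < /2 - delta /\ 0 < cross s) -> 0 < speed2 t ->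
  Derive rhoI t
  = sqrt (speed2 t) * (3 / 2 * dspeed2 t * cross t - speed2 t * dcross t) / cross t ^ 2.
Proof.
  intros hloc hS; destruct (locally_singleton _ _ hloc) as [ht hC].
  rewrite (Derive_ext_loc _ (fun s => sqrt (speed2 s) ^ 3 / cross s)).
  - apply is_derive_unique, is_derive_sqrt_cube_div; try lra;
      [apply is_derive_speed2 | apply is_derive_cross]; exact ht.
  - revert hloc; apply filter_imp; intros s [hs hc].
    rewrite rhoI_eq, Rabs_right by lra; reflexivity.
Qed.

Lemma LCG_of_frame (t q C D : R) :
  speedI t = q -> crossI t = C -> Derive rhoI t = q * D / C ^ 2 -> 0 < q -> 0 < C -> 0 < D ->
  LCGx t = ln (q ^ 3 / C) /\ LCGx t + LCGy t = ln (q ^ 6 / D).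
Proof.
  intros hs hc hd hq hC hD; unfold LCGx, LCGy; rewrite hd; unfold rhoI.
  rewrite hs, hc, (Rabs_right C) by lra.
  split; [reflexivity |].
  replace (q / (q * D / C ^ 2)) with (C ^ 2 / D) by (field; lra).
  assert (0 < q ^ 3 / C) by (apply Rdiv_lt_0_compat; [apply pow_lt |]; lra).
  assert (0 < C ^ 2 / D) by (apply Rdiv_lt_0_compat; [apply pow_lt |]; lra).
  rewrite Rabs_right, <- ln_mult by first [lra | apply Rmult_lt_0_compat; assumption].
  f_equal; field; lra.
Qed.

Lemma inv_sin_delta_sqr : / sin delta ^ 2 = 4 / 3.
Proof. rewrite sin_delta_sqr; field. Qed.

(* Rescalings by powers of [rhoP] (see the [_scale] lemmas below) that turn all the quantities
   describing the isoptic into functions with expansions in powers of [eta]. *)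
Definition eta (t : R) : R := sin delta * rhoP t ^ 2.

Definition ratio (t : R) : R := rhoP (t + delta) / rhoP t.

Definition aN (t : R) : R := aI t / rhoP t.

Definition kN (t : R) : R := sin delta * kI t / rhoP t.

Definition speed2N (t : R) : R := aN t ^ 2 + 4 / 3 * kN t ^ 2.

Definition crossN (t : R) : R :=
  aN t * (2 * aN t - 1) - 4 / 3 * kN t * (ratio t + 1 / 2 - 2 * kN t).

Definition dspeed2N (t : R) : R := 2 * (aN t * (ratio t + 1 / 2 - kN t) + kN t * (aN t - 1)).

Definition dcrossN (t : R) : R :=
  aN t * (ratio t + 1 / 2 - kN t - eta t)
  - kN t * (4 / 3 * (ratio t ^ 3 + 1 / 2) * eta t - (aN t - 1)) + dspeed2N t.

Definition drhoN (t : R) : R := 3 / 2 * dspeed2N t * crossN t - speed2N t * dcrossN t.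

Section Scaling.

Variable t : R.

Hypothesis ht : t < /2 - delta.

Let rhoP_t_pos : 0 < rhoP t.
Proof. apply rhoP_pos; pose proof delta_pos; lra. Qed.

Let sd_pos := sin_delta_pos.

Let aI_scale : aI t = rhoP t * aN t.
Proof. unfold aN; field; lra. Qed.

Let kI_scale : kI t = rhoP t * kN t / sin delta.
Proof. unfold kN; field; lra. Qed.

Let shift_scale : rhoP (t + delta) = rhoP t * ratio t.
Proof. unfold ratio; field; lra. Qed.

Let daI_scale : daI t = rhoP t / sin delta * (ratio t + 1 / 2 - kN t).
Proof. unfold daI; rewrite cos_delta, shift_scale, kI_scale; field; lra. Qed.

Ltac scale :=
  rewrite ?daI_scale, ?aI_scale, ?kI_scale, ?shift_scale, ?cos_delta; unfold eta;
  replace (4 / 3) with (/ sin delta ^ 2) by apply inv_sin_delta_sqr; field; lra.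

Lemma speed2_scale : speed2 t = rhoP t ^ 2 * speed2N t.
Proof. unfold speed2, speed2N; scale. Qed.

Lemma cross_scale : cross t = rhoP t ^ 2 * crossN t.
Proof. unfold cross, crossN; scale. Qed.

Lemma dspeed2_scale : dspeed2 t = rhoP t ^ 2 / sin delta * dspeed2N t.
Proof. unfold dspeed2, dspeed2N; scale. Qed.

Lemma dcross_scale : dcross t = rhoP t ^ 2 / sin delta * dcrossN t.
Proof. unfold dcross, dcrossN, dspeed2N; scale. Qed.

End Scaling.

Lemma isoptic_frame t :
  locally t (fun s => s < /2 - delta /\ 0 < crossN s) -> 0 < speed2N t ->
  speedI t = rhoP t * sqrt (speed2N t) /\ crossI t = rhoP t ^ 2 * crossN t
  /\ Derive rhoI t = rhoP t * sqrt (speed2N t) * (rhoP t ^ 4 / sin delta * drhoN t)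
                     / (rhoP t ^ 2 * crossN t) ^ 2.
Proof.
  intros hloc hS; destruct (locally_singleton _ _ hloc) as [ht hC].
  pose proof delta_pos; pose proof sin_delta_pos.
  assert (hu : 0 < rhoP t) by (apply rhoP_pos; lra).
  assert (hq : sqrt (speed2 t) = rhoP t * sqrt (speed2N t)).
  { rewrite speed2_scale, sqrt_mult, sqrt_pow2 by (try apply pow2_ge_0; lra); reflexivity. }
  rewrite speedI_eq, crossI_eq, cross_scale, <- hq by exact ht.
  split; [reflexivity | split; [reflexivity |]].
  rewrite Derive_rhoI.
  - rewrite speed2_scale, cross_scale, dspeed2_scale, dcross_scale by exact ht.
    unfold drhoN; field; lra.
  - revert hloc; apply filter_imp; intros s [hs hc]; split; [exact hs |].
    rewrite cross_scale by exact hs; apply Rmult_lt_0_compat; [apply pow_lt, rhoP_pos |]; lra.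
  - rewrite speed2_scale by exact ht; apply Rmult_lt_0_compat; [apply pow_lt |]; lra.
Qed.

Lemma LCG_formulas t :
  locally t (fun s => s < /2 - delta /\ 0 < crossN s) -> 0 < speed2N t -> 0 < drhoN t ->
  LCG_defined t
  /\ LCGx t = ln (rhoP t) + 3 / 2 * ln (speed2N t) - ln (crossN t)
  /\ LCGx t + LCGy t = ln (eta t * speed2N t ^ 3 / drhoN t).
Proof.
  intros hloc hS hD; destruct (locally_singleton _ _ hloc) as [ht hC].
  destruct (isoptic_frame t hloc hS) as [hs [hc hd]].
  pose proof delta_pos; pose proof sin_delta_pos.
  assert (hu : 0 < rhoP t) by (apply rhoP_pos; lra).
  assert (hq : 0 < sqrt (speed2N t)) by (apply sqrt_lt_R0, hS).
  assert (hC' : 0 < rhoP t ^ 2 * crossN t) by (apply Rmult_lt_0_compat; [apply pow_lt |]; lra).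
  assert (hD' : 0 < rhoP t ^ 4 / sin delta * drhoN t)
    by (apply Rmult_lt_0_compat; [apply Rdiv_lt_0_compat; [apply pow_lt |] |]; lra).
  assert (hq' : 0 < rhoP t * sqrt (speed2N t)) by (apply Rmult_lt_0_compat; lra).
  destruct (LCG_of_frame _ _ _ _ hs hc hd hq' hC' hD') as [hx hxy].
  split; [| split].
  - repeat split; [exact ht | rewrite hs; exact hq' | rewrite hc; lra |].
    rewrite hd; apply Rgt_not_eq, Rdiv_lt_0_compat; [apply Rmult_lt_0_compat | apply pow_lt]; lra.
  - rewrite hx.
    replace ((rhoP t * sqrt (speed2N t)) ^ 3 / (rhoP t ^ 2 * crossN t))
      with (rhoP t * (sqrt (speed2N t) ^ 3 * / crossN t)) by (field; lra).
    assert (0 < sqrt (speed2N t) ^ 3) by (apply pow_lt, hq).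
    assert (0 < / crossN t) by (apply Rinv_0_lt_compat, hC).
    rewrite !ln_mult, ln_Rinv, ln_pow, ln_sqrt
      by first [assumption | apply Rmult_lt_0_compat; assumption].
    simpl INR; field.
  - rewrite hxy; f_equal.
    replace ((rhoP t * sqrt (speed2N t)) ^ 6) with (rhoP t ^ 6 * (sqrt (speed2N t))² ^ 3)
      by (unfold Rsqr; ring).
    rewrite Rsqr_sqrt by lra; unfold eta; field; lra.
Qed.

(** * Asymptotics of the isoptic *)

Lemma eta_eq t : t < /2 -> eta t = sin delta / (1 - 2 * t).
Proof. intro ht; unfold eta; rewrite rhoP_sqr by exact ht; reflexivity. Qed.

Lemma eta_pos t : t < /2 -> 0 < eta t.
Proof.
  intro ht; rewrite eta_eq by exact ht; apply Rdiv_lt_0_compat; [apply sin_delta_pos | lra].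
Qed.

Lemma eta_pos_near : at_minus_infty (fun t => 0 < eta t).
Proof. exists 0; intros t ht; apply eta_pos; lra. Qed.

Lemma eta_small eps : 0 < eps -> at_minus_infty (fun t => eta t < eps).
Proof.
  intro he; exists (Rmin 0 ((1 - / eps) / 2)); intros t ht.
  assert (t < 0) by (eapply Rlt_le_trans; [exact ht | apply Rmin_l]).
  assert (t < (1 - / eps) / 2) by (eapply Rlt_le_trans; [exact ht | apply Rmin_r]).
  rewrite eta_eq by lra; pose proof sin_delta_lt_1.
  apply (Rmult_lt_reg_r (1 - 2 * t)); [lra |]; field_simplify; [| lra].
  assert (hinv : / eps < 1 - 2 * t) by lra.
  apply (Rmult_lt_compat_l eps) in hinv; [| exact he]; rewrite Rinv_r in hinv; lra.
Qed.

Lemma eta_shift_le t : t < /2 -> eta (t - PI) <= eta t.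
Proof.
  intro ht; pose proof PI_RGT_0; pose proof sin_delta_pos.
  rewrite !eta_eq by lra; apply Rmult_le_compat_l; [lra | apply Rinv_le_contravar; lra].
Qed.

Lemma ln_rhoP_increment t : t < - PI -> eta t <= ln (rhoP t) - ln (rhoP (t - PI)).
Proof.
  intro ht; pose proof PI2_3_2; pose proof PI_4.
  pose proof sin_delta_pos; pose proof sin_delta_lt_1.
  rewrite eta_eq by lra.
  assert (e : ln (rhoP t) - ln (rhoP (t - PI)) = ln ((1 - 2 * t + 2 * PI) / (1 - 2 * t)) / 2).
  { unfold rhoP, Rdiv; rewrite !ln_Rinv, !ln_sqrt, ln_mult, ln_Rinv
      by (try apply Rinv_0_lt_compat; try apply sqrt_lt_R0; lra).
    replace (1 - 2 * (t - PI)) with (1 - 2 * t + 2 * PI) by ring; field. }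
  rewrite e; set (a := 1 - 2 * t) in *.
  assert (hl := ln_ge_1_sub_inv ((a + 2 * PI) / a) ltac:(apply Rdiv_lt_0_compat; unfold a; lra)).
  replace (1 - / ((a + 2 * PI) / a)) with (2 * PI / (a + 2 * PI)) in hl by (field; unfold a; lra).
  assert (sin delta / a <= PI / (a + 2 * PI)); [| lra].
  apply (Rmult_le_reg_r (a * (a + 2 * PI))); [unfold a; nra |].
  field_simplify; unfold a in *; nra.
Qed.

Definition lam : R := delta / sin delta.

Lemma lam_pos : 0 < lam.
Proof. apply Rdiv_lt_0_compat; [apply delta_pos | apply sin_delta_pos]. Qed.

Lemma ratio_sqr t : t < /2 - delta -> ratio t ^ 2 * (1 - 2 * (lam * eta t)) = 1.
Proof.
  intro ht; pose proof delta_pos; pose proof sin_delta_pos.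
  assert (hu : 0 < rhoP t) by (apply rhoP_pos; lra).
  unfold ratio, lam, eta; replace ((rhoP (t + delta) / rhoP t) ^ 2)
    with (rhoP (t + delta) ^ 2 / rhoP t ^ 2) by (field; lra).
  rewrite !rhoP_sqr by lra; field; lra.
Qed.

Lemma ratio_pos t : t < /2 - delta -> 0 < ratio t.
Proof. intro ht; pose proof delta_pos; apply Rdiv_lt_0_compat; apply rhoP_pos; lra. Qed.

Lemma lam_eta_small : at_minus_infty (fun t => t < /2 - delta /\ 0 < lam * eta t <= 1 / 4).
Proof.
  pose proof lam_pos.
  assert (he := eta_small (/ (4 * lam)) ltac:(apply Rinv_0_lt_compat; lra)).
  generalize (filter_and _ _ (filter_and _ _ he eta_pos_near) (at_minus_infty_lt (/2 - delta))).
  apply filter_imp; intros t [[hs hp] ht]; split; [exact ht |]; split; [nra |].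
  apply (Rmult_lt_compat_l lam) in hs; [| lra].
  replace (lam * / (4 * lam)) with (1 / 4) in hs by (field; lra); lra.
Qed.

Lemma ratio_le_2 : at_minus_infty (fun t => ratio t <= 2).
Proof.
  generalize lam_eta_small; apply filter_imp; intros t [ht hx].
  apply (inv_sqrt_le_2 (lam * eta t)); [lra | apply ratio_pos | apply ratio_sqr]; exact ht.
Qed.

Ltac expand_rec :=
  lazymatch goal with
  | |- has_expansion eta (fun t => @?A t + @?B t) _ _ _ _ =>
      eapply (has_expansion_plus eta A B); expand_rec
  | |- has_expansion eta (fun t => @?A t - @?B t) _ _ _ _ =>
      eapply (has_expansion_minus eta A B); expand_rec
  | |- has_expansion eta (fun t => @?A t * @?B t) _ _ _ _ =>
      eapply (has_expansion_mult eta eta_pos_near eta_small A B); expand_rec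
  | |- has_expansion eta (fun t => - @?A t) _ _ _ _ =>
      eapply (has_expansion_opp eta A); expand_rec
  | |- has_expansion eta (fun t => @?A t ^ S ?n) _ _ _ _ =>
      apply (has_expansion_pow_S eta A n); expand_rec
  | |- has_expansion eta (fun t => @?A t ^ 0) _ _ _ _ => exact (has_expansion_const eta 1)
  | |- has_expansion eta _ _ _ _ _ =>
      first [apply has_expansion_const | apply has_expansion_h | eassumption]
  end.

Ltac expand := eapply has_expansion_ext; [expand_rec | field | field | field | field].

Lemma ratio_expansion : has_expansion eta ratio 1 lam (3 / 2 * lam ^ 2) (5 / 2 * lam ^ 3).
Proof.
  apply (has_expansion_perturb eta eta_pos_near
    (fun t => 1 + lam * eta t + 3 / 2 * lam ^ 2 * eta t ^ 2 + 5 / 2 * lam ^ 3 * eta t ^ 3)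
    _ _ _ _ _ (12 * lam ^ 4)); [expand |].
  generalize lam_eta_small; apply filter_imp; intros t [ht hx].
  replace (12 * lam ^ 4 * eta t ^ 4) with (12 * (lam * eta t) ^ 4) by ring.
  replace (1 + lam * eta t + 3 / 2 * lam ^ 2 * eta t ^ 2 + 5 / 2 * lam ^ 3 * eta t ^ 3)
    with (1 + lam * eta t + 3 / 2 * (lam * eta t) ^ 2 + 5 / 2 * (lam * eta t) ^ 3) by ring.
  apply inv_sqrt_taylor3; [lra | apply ratio_pos | apply ratio_sqr]; exact ht.
Qed.

Definition remainder (phi t : R) : R :=
  RInt (fun psi => 105 * rhoP psi ^ 9 * cos (psi - phi)) t (t + delta) / rhoP t ^ 9.

Lemma Rabs_remainder_le phi t :
  t < /2 - delta -> Rabs (remainder phi t) <= 105 * delta * ratio t ^ 9.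
Proof.
  intro ht; pose proof delta_pos.
  assert (hu : 0 < rhoP t ^ 9) by (apply pow_lt, rhoP_pos; lra).
  assert (hb := RInt_rhoP_cos_remainder phi t (t + delta) ltac:(lra) ltac:(lra)).
  unfold remainder, Rdiv; rewrite Rabs_mult, Rabs_inv, (Rabs_right (rhoP t ^ 9)) by lra.
  replace (105 * delta * ratio t ^ 9)
    with ((t + delta - t) * (105 * rhoP (t + delta) ^ 9) * / rhoP t ^ 9)
    by (unfold ratio; field; apply Rgt_not_eq, rhoP_pos; lra).
  apply Rmult_le_compat_r; [apply Rlt_le, Rinv_0_lt_compat |]; lra.
Qed.

Lemma bounded_remainder (phi : R -> R) : bounded_near (fun t => remainder (phi t) t).
Proof.
  exists (105 * delta * 2 ^ 9); pose proof delta_pos.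
  generalize (filter_and _ _ ratio_le_2 lam_eta_small); apply filter_imp; intros t [hr [ht _]].
  eapply Rle_trans; [apply Rabs_remainder_le, ht |].
  apply Rmult_le_compat_l; [lra | apply pow_incr; split; [apply Rlt_le, ratio_pos |]; lra].
Qed.

Lemma kN_eq t : t < /2 - delta ->
  kN t = ratio t - cos delta - eta t - 3 * (ratio t ^ 5 - cos delta) * / sin delta ^ 2 * eta t ^ 2
         + 15 * / sin delta ^ 2 * eta t ^ 3
         + eta t ^ 4 * (remainder (t + delta - PI / 2) t * (/ sin delta ^ 2) ^ 2).
Proof.
  intro ht; pose proof delta_pos; pose proof sin_delta_pos.
  assert (hu : 0 < rhoP t) by (apply rhoP_pos; lra).
  unfold kN; rewrite kI_RInt, RInt_rhoP_cos by lra; unfold prim_cos.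
  replace (t + delta - (t + delta - PI / 2)) with (PI / 2) by ring.
  replace (t - (t + delta - PI / 2)) with (PI / 2 - delta) by ring.
  rewrite sin_PI2, cos_PI2, sin_shift, cos_shift; unfold remainder, ratio, eta; field; lra.
Qed.

Lemma aN_eq t : t < /2 - delta ->
  aN t = 1 + (ratio t ^ 3 - cos delta) * / sin delta ^ 2 * eta t - 3 * / sin delta ^ 2 * eta t ^ 2
         - 15 * (ratio t ^ 7 - cos delta) * (/ sin delta ^ 2) ^ 2 * eta t ^ 3
         + eta t ^ 4 * (remainder (t + delta) t * / sin delta * (/ sin delta ^ 2) ^ 2).
Proof.
  intro ht; pose proof delta_pos; pose proof sin_delta_pos.
  assert (hu : 0 < rhoP t) by (apply rhoP_pos; lra).
  unfold aN; rewrite aI_RInt, RInt_rhoP_cos by lra; unfold prim_cos.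
  replace (t + delta - (t + delta)) with 0 by ring.
  replace (t - (t + delta)) with (- delta) by ring.
  rewrite sin_0, cos_0, sin_neg, cos_neg; unfold remainder, ratio, eta; field; lra.
Qed.

Lemma kN_expansion :
  has_expansion eta kN (3 / 2) (lam - 1) (3 / 2 * lam ^ 2 - 6) (5 / 2 * lam ^ 3 - 20 * lam + 20).
Proof.
  pose proof ratio_expansion.
  assert (hr := bounded_remainder (fun t => t + delta - PI / 2)); cbv beta in hr.
  apply (has_expansion_add_remainder eta eta_pos_near
    (fun t => ratio t + / 2 - eta t - 4 * (ratio t ^ 5 + / 2) * eta t ^ 2 + 20 * eta t ^ 3) kN
    _ _ _ _ (fun t => remainder (t + delta - PI / 2) t * (4 / 3) ^ 2)); [expand | bounded |].
  generalize lam_eta_small; apply filter_imp; intros t [ht _].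
  rewrite kN_eq, cos_delta, inv_sin_delta_sqr by exact ht; field.
Qed.

Lemma aN_expansion : has_expansion eta aN 1 2 (4 * lam - 4) (10 * lam ^ 2 - 40).
Proof.
  pose proof ratio_expansion; pose proof sin_delta_pos.
  assert (hr := bounded_remainder (fun t => t + delta)); cbv beta in hr.
  apply (has_expansion_add_remainder eta eta_pos_near
    (fun t => 1 + 4 / 3 * (ratio t ^ 3 + / 2) * eta t - 4 * eta t ^ 2
              - 80 / 3 * (ratio t ^ 7 + / 2) * eta t ^ 3) aN
    _ _ _ _ (fun t => remainder (t + delta) t * / sin delta * (4 / 3) ^ 2)); [expand | bounded |].
  generalize lam_eta_small; apply filter_imp; intros t [ht _].
  rewrite aN_eq, cos_delta, inv_sin_delta_sqr by exact ht; field; lra.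
Qed.

Lemma speed2N_expansion : has_expansion eta speed2N 4 (4 * lam)
  (- 80 / 3 + 16 / 3 * lam + 22 / 3 * lam ^ 2) (- 80 * lam + 16 * lam ^ 2 + 14 * lam ^ 3).
Proof. pose proof aN_expansion; pose proof kN_expansion; unfold speed2N; expand. Qed.

Lemma crossN_expansion : has_expansion eta crossN 4 (4 * lam)
  (- 112 / 3 + 8 * lam + 22 / 3 * lam ^ 2) (- 112 * lam + 24 * lam ^ 2 + 14 * lam ^ 3).
Proof.
  pose proof ratio_expansion; pose proof aN_expansion; pose proof kN_expansion.
  unfold crossN; expand.
Qed.

Lemma drhoN_expansion :
  has_expansion eta drhoN 0 16 (48 * lam) (- 896 / 3 + 160 / 3 * lam + 448 / 3 * lam ^ 2).
Proof.
  pose proof ratio_expansion; pose proof aN_expansion; pose proof kN_expansion.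
  pose proof speed2N_expansion; pose proof crossN_expansion.
  unfold drhoN, dcrossN, dspeed2N; expand.
Qed.

(* [LCGx + LCGy = ln (4 + defect / drhoN)] (see [LCG_formulas]), and [defect] is of exact order
   [eta^3]: this is what keeps the LCG off every straight line. *)
Definition defect (t : R) : R := eta t * speed2N t ^ 3 - 4 * drhoN t.

Definition defect_coef : R := - 256 / 3 + 128 / 3 * lam - 160 / 3 * lam ^ 2.

Lemma defect_coef_neg : defect_coef < 0.
Proof. unfold defect_coef; pose proof (pow2_ge_0 (lam - 2 / 5)); nra. Qed.

Lemma defect_expansion : has_expansion eta defect 0 0 0 defect_coef.
Proof.
  pose proof speed2N_expansion; pose proof drhoN_expansion.
  unfold defect, defect_coef; expand.
Qed.

Lemma regular_near : at_minus_infty (fun t =>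
  locally t (fun s => s < /2 - delta /\ 0 < crossN s) /\ 0 < speed2N t /\ 8 * eta t <= drhoN t
  /\ 0 < eta t).
Proof.
  assert (hC := has_expansion_pos _ eta_pos_near eta_small _ 4 _ _ _ ltac:(lra) crossN_expansion).
  assert (hS := has_expansion_pos _ eta_pos_near eta_small _ 4 _ _ _ ltac:(lra) speed2N_expansion).
  assert (hD := has_expansion_linear_lower _ eta_pos_near eta_small _ 16 _ _ ltac:(lra)
    drhoN_expansion).
  apply (filter_and _ _ (at_minus_infty_locally _ (filter_and _ _ (at_minus_infty_lt _) hC))).
  generalize (filter_and _ _ (filter_and _ _ hS hD) eta_pos_near); apply filter_imp.
  intros t [[hs hd] he]; repeat split; lra.
Qed.

Lemma LCG_sum_near : exists K, 0 <= K /\ at_minus_infty (fun t =>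
  LCG_defined t /\ LCGx t + LCGy t < ln 4 /\ Rabs (LCGx t + LCGy t - ln 4) <= K * eta t ^ 2).
Proof.
  destruct (has_expansion_cubic _ eta_pos_near eta_small _ _ defect_coef_neg defect_expansion)
    as [K hK].
  assert (hK0 : 0 <= Rabs K / 32) by (pose proof (Rabs_pos K); lra).
  exists (Rabs K / 16); split; [lra |].
  assert (hsmall := h_mult_small _ eta_pos_near eta_small _ (1 / 2) hK0 ltac:(lra)).
  generalize (filter_and _ _ (filter_and _ _ regular_near hK)
    (filter_and _ _ hsmall (eta_small 1 Rlt_0_1))).
  apply filter_imp; intros t [[[hloc [hS [hD he]]] [hneg hb]] [hs he1]].
  destruct (LCG_formulas t hloc hS ltac:(lra)) as [hdef [_ hxy]].
  set (y := defect t / (4 * drhoN t)).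
  assert (hy : Rabs y <= Rabs K / 32 * eta t ^ 2) by (apply Rabs_div_linear_le; lra).
  assert (hy2 : Rabs y <= 1 / 2) by (assert (eta t ^ 2 <= eta t) by nra; nra).
  assert (hyneg : y < 0) by (apply Rdiv_neg_pos; lra).
  assert (hsum : LCGx t + LCGy t - ln 4 = ln (1 + y)).
  { assert (e : eta t * speed2N t ^ 3 / drhoN t = 4 * (1 + y)) by (unfold y, defect; field; lra).
    apply Rabs_le_between in hy2; rewrite hxy, e, ln_mult by lra; ring. }
  split; [exact hdef | split].
  - assert (ln (1 + y) < 0); [| lra].
    rewrite <- ln_1; apply ln_increasing; apply Rabs_le_between in hy2; lra.
  - rewrite hsum; eapply Rle_trans; [apply Rabs_ln_1p_le, hy2 | lra].
Qed.

Lemma LCGx_near : at_minus_infty (fun t =>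
  LCGx t = ln (rhoP t) + 3 / 2 * ln (speed2N t) - ln (crossN t)).
Proof.
  generalize regular_near; apply filter_imp; intros t [hloc [hS [hD he]]].
  apply (LCG_formulas t hloc hS); lra.
Qed.

Lemma LCGx_shape : exists K, 0 <= K /\ at_minus_infty (fun t =>
  Rabs (LCGx t - ln (rhoP t) - (ln 4 / 2 + lam / 2 * eta t)) <= K * eta t ^ 2).
Proof.
  destruct (has_expansion_O2 _ eta_pos_near eta_small _ _ _ _ _ speed2N_expansion) as [K1 [hK1 E1]].
  destruct (has_expansion_O2 _ eta_pos_near eta_small _ _ _ _ _ crossN_expansion) as [K2 [hK2 E2]].
  destruct (ln_first_order _ eta_pos_near eta_small _ 4 _ _ ltac:(lra) hK1 E1) as [L1 F1].
  destruct (ln_first_order _ eta_pos_near eta_small _ 4 _ _ ltac:(lra) hK2 E2) as [L2 F2].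
  pose proof (Rabs_pos L1); pose proof (Rabs_pos L2).
  exists (3 / 2 * Rabs L1 + Rabs L2); split; [lra |].
  generalize (filter_and _ _ (filter_and _ _ F1 F2) LCGx_near); apply filter_imp.
  intros t [[f1 f2] ->]; replace (4 * lam / 4) with lam in f1, f2 by field.
  replace (ln (rhoP t) + 3 / 2 * ln (speed2N t) - ln (crossN t) - ln (rhoP t)
           - (ln 4 / 2 + lam / 2 * eta t))
    with (3 / 2 * (ln (speed2N t) - (ln 4 + lam * eta t)) - (ln (crossN t) - (ln 4 + lam * eta t)))
    by field.
  eapply Rle_trans; [apply Rabs_triang |].
  rewrite Rabs_Ropp, Rabs_mult, (Rabs_right (3 / 2)) by lra.
  pose proof (pow2_ge_0 (eta t)); pose proof (Rle_abs L1); pose proof (Rle_abs L2).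
  assert (L1 * eta t ^ 2 <= Rabs L1 * eta t ^ 2) by (apply Rmult_le_compat_r; lra).
  assert (L2 * eta t ^ 2 <= Rabs L2 * eta t ^ 2) by (apply Rmult_le_compat_r; lra).
  lra.
Qed.

Lemma LCGx_increment : at_minus_infty (fun t => eta t / 2 <= LCGx t - LCGx (t - PI)).
Proof.
  destruct LCGx_shape as [K [hK E]]; pose proof PI_RGT_0; pose proof lam_pos.
  assert (hs := h_mult_small _ eta_pos_near eta_small _ (1 / 4) hK ltac:(lra)).
  assert (E' := at_minus_infty_shift _ PI ltac:(lra) E).
  generalize (filter_and _ _ (filter_and _ _ E E') (filter_and _ _ hs (at_minus_infty_lt (- PI)))).
  apply filter_imp; intros t [[hx hx'] [hKe ht]].
  apply (increment_lower _ _ (ln (rhoP t)) (ln (rhoP (t - PI))) _ (eta (t - PI))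
           (ln 4 / 2) (lam / 2) K);
    try assumption; try lra.
  - split; [apply Rlt_le, eta_pos | apply eta_shift_le]; lra.
  - apply ln_rhoP_increment, ht.
Qed.

Lemma is_lim_LCG_slope : is_lim LCG_slope m_infty (-1).
Proof.
  apply is_lim_spec; intro eps; destruct LCG_sum_near as [K [hK E]].
  assert (hs := h_mult_small _ eta_pos_near eta_small (4 * K) eps ltac:(lra) (cond_pos eps)).
  assert (E' := at_minus_infty_shift _ PI (Rlt_le _ _ PI_RGT_0) E).
  generalize (filter_and _ _ (filter_and _ _ E E')
    (filter_and _ _ (filter_and _ _ hs LCGx_increment) (at_minus_infty_lt (/ 2)))).
  apply filter_imp; intros t [[[_ [_ hb]] [_ [_ hb']]] [[hKe hinc] ht]].
  assert (he : 0 < eta t) by (apply eta_pos, ht).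
  assert (K * eta (t - PI) ^ 2 <= K * eta t ^ 2).
  { apply Rmult_le_compat_l; [lra |]; apply pow_incr; split;
      [apply Rlt_le, eta_pos | apply eta_shift_le]; pose proof PI_RGT_0; lra. }
  unfold LCG_slope; eapply Rle_lt_trans.
  - apply (slope_near_minus_one _ _ _ _ (ln 4) (K * eta t ^ 2) (eta t / 2)); lra.
  - replace (2 * (K * eta t ^ 2) / (eta t / 2)) with (4 * K * eta t) by (field; lra); exact hKe.
Qed.

Lemma is_lim_LCG_sum : is_lim (fun t => LCGx t + LCGy t) m_infty (ln 4).
Proof.
  apply is_lim_spec; intro eps; destruct LCG_sum_near as [K [hK E]].
  assert (hs := h_mult_small _ eta_pos_near eta_small K eps hK (cond_pos eps)).
  generalize (filter_and _ _ (filter_and _ _ E hs)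
    (filter_and _ _ eta_pos_near (eta_small 1 Rlt_0_1))).
  apply filter_imp; intros t [[[_ [_ hb]] hKe] [he he1]].
  assert (K * eta t ^ 2 <= K * eta t) by (apply Rmult_le_compat_l; nra); lra.
Qed.

Theorem mainTheorem3 :
  (~ exists a c : R, forall t : R, LCG_defined t -> LCGy t = a * LCGx t + c)
  /\ is_lim LCG_slope m_infty (-1).
Proof.
  split; [| exact is_lim_LCG_slope].
  intros [a [c hline]]; destruct LCG_sum_near as [K [_ E]].
  assert (E' := at_minus_infty_shift _ PI (Rlt_le _ _ PI_RGT_0) E).
  assert (hslope : at_minus_infty (fun t => LCG_slope t = a)).
  { generalize (filter_and _ _ (filter_and _ _ E E') (filter_and _ _ LCGx_increment eta_pos_near)).
    apply filter_imp; intros t [[[ht _] [ht' _]] [hinc he]].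
    unfold LCG_slope; rewrite !hline by assumption; field; lra. }
  assert (ha := is_lim_eventually_const _ _ _ hslope is_lim_LCG_slope); subst a.
  assert (hsum : at_minus_infty (fun t => LCGx t + LCGy t = c)).
  { revert E; apply filter_imp; intros t [ht _]; rewrite hline by exact ht; ring. }
  assert (hc := is_lim_eventually_const _ _ _ hsum is_lim_LCG_sum); subst c.
  destruct (filter_ex _ (filter_and _ _ hsum E)) as [t [h1 [_ [h2 _]]]]; lra.
Qed.
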